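(* Let $d\ge 2$ and let $C,C_1,C_2,\ldots$ be $d$-dimensional copulas. If $C_n \xrightarrow{\text{wcc}} C$, then for every $J\subseteq\{1,\dots,d-1\}$ with $1\le |J|\le d-1$ we have $(C_n)_{J\cup\{d\}} \xrightarrow{\text{wcc}} C_{J\cup\{d\}}$.
   Context: $\mathbb{I}=[0,1]$, $\lambda$ denotes Lebesgue measure. For a $k$-dimensional copula $A$ ($k\ge 2$), its Markov kernel $K_A:\mathbb{I}\times\mathcal{B}(\mathbb{I}^{k-1})\to\mathbb{I}$ is (a version of) the regular conditional distribution of $(U_1,\dots,U_{k-1})$ given $U_k=v$, where $(U_1,\dots,U_k)\sim A$; equivalently $A(\mathbf{u},v)=\int_{[0,v]}K_A(t,[\mathbf{0},\mathbf{u}])\,d\lambda(t)$. A sequence of $k$-dimensional copulas $(A_n)$ converges weakly conditional to $A$, written $A_n\xrightarrow{\text{wcc}}A$, if for $\lambda$-almost every $v\in\mathbb{I}$ the probability measures $K_{A_n}(v,\cdot)$ converge weakly to $K_A(v,\cdot)$ on $\mathcal{B}(\mathbb{I}^{k-1})$. For $J'=\{j_1<\dots<j_m\}\subseteq\{1,\dots,d\}$ with $m\ge2$, $C_{J'}$ denotes the marginal copula of $C$ in the coordinates $j_1,\dots,j_m$ (in this order), so that in $C_{J\cup\{d\}}$ the last coordinate is coordinate $d$ of $C$. *)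

From HB Require Import structures.
From mathcomp Require Import all_boot all_order all_algebra.
From mathcomp Require Import all_classical all_reals all_analysis.

Unset Strict Implicit.
Unset Printing Implicit Defensive.

Import Order.TTheory GRing.Theory Num.Theory.
Import numFieldNormedType.Exports.
Local Open Scope classical_set_scope.
Local Open Scope ring_scope.

Section copulas.
Variable R : realType.

Definition unit_cube (k : nat) : set (k.-tuple R) :=
  [set x | forall i : 'I_k, 0 <= tnth x i <= 1].

(** A k-dimensional copula, given as a function on R^k of which only the
    values on I^k matter: grounded, uniform margins, k-increasing. *)
Definition copula {k : nat} (A : k.-tuple R -> R) : Prop :=
  [/\
      (forall u, u \in unit_cube k ->
         (exists i : 'I_k, tnth u i = 0) -> A u = 0),
      (forall u (i : 'I_k), u \in unit_cube k ->
         (forall j : 'I_k, j != i -> tnth u j = 1) -> A u = tnth u i) &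
      (* k-increasing: every A-volume of a box in I^k is nonnegative *)
      (forall a b, a \in unit_cube k -> b \in unit_cube k ->
         (forall i : 'I_k, tnth a i <= tnth b i) ->
         0 <= \sum_(S : {set 'I_k})
                 (-1) ^+ #|S| *
                 A [tuple (if i \in S then tnth a i else tnth b i) | i < k])].

Definition lower_box {m : nat} (u : m.-tuple R) : set (m.-tuple R) :=
  [set x | forall i : 'I_m, 0 <= tnth x i <= tnth u i].

(** K is (a version of) the Markov kernel of the (m+1)-dimensional copula A:
    a probability kernel from I to I^m (we take it on R -> R^m and require it
    to be concentrated on I^m for every v in I) with
    A(u,v) = \int_[0,v] K(t,[0,u]) d lambda(t). *)
Definition markov_kernel_of {m : nat} (A : m.+1.-tuple R -> R)
    (K : R.-pker R ~> m.-tuple R) : Prop :=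
  (forall v : R, 0 <= v <= 1 -> K v (~` unit_cube m) = 0%E) /\
  (forall (u : m.-tuple R) (v : R), u \in unit_cube m -> 0 <= v <= 1 ->
     (A [tuple of rcons u v])%:E =
     (\int[lebesgue_measure]_(t in `[0%R, v]) K t (lower_box u))%E).

(** continuous real functions on I^m (I^m with the product topology,
    i.e. the one given by the max-distance) *)
Definition cont_on_cube {m : nat} (f : m.-tuple R -> R) : Prop :=
  forall x, x \in unit_cube m -> forall e : R, 0 < e ->
  exists2 delta : R, 0 < delta &
    forall y, y \in unit_cube m ->
      (forall i : 'I_m, `|tnth x i - tnth y i| < delta) ->
      `|f x - f y| < e.

Definition weak_conv {m : nat} (mu_ : nat -> set (m.-tuple R) -> \bar R)
    (mu : set (m.-tuple R) -> \bar R) : Prop :=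
  forall f : m.-tuple R -> R, cont_on_cube f ->
    (fun n => \int[mu_ n]_(x in unit_cube m) (f x)%:E)%E @ \oo -->
    (\int[mu]_(x in unit_cube m) (f x)%:E)%E.

Definition wcc {m : nat} (A_ : nat -> m.+1.-tuple R -> R)
    (A : m.+1.-tuple R -> R) : Prop :=
  exists (K_ : nat -> R.-pker R ~> m.-tuple R) (K : R.-pker R ~> m.-tuple R),
  [/\ forall n, markov_kernel_of (A_ n) (K_ n),
      markov_kernel_of A K &
      {ae lebesgue_measure, forall v : R, 0 <= v <= 1 ->
         weak_conv (fun n => K_ n v) (K v)}].

(** For C a d-dimensional copula (d = n.+1, coordinates 0..n) and
    J a subset of {0,..,n-1}, the marginal copula C_{J u {n}} in the
    coordinates of J (in increasing order) followed by coordinate n: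
    the w-th argument position of an element j of J is its rank in enum J,
    the last argument (position #|J|) is coordinate n, all other coordinates
    are set to 1. *)
Definition marginal {n : nat} (C : n.+1.-tuple R -> R) (J : {set 'I_n.+1})
    : #|J|.+1.-tuple R -> R :=
  fun w => C [tuple (if i \in J then nth 1 w (index i (enum J))
                     else if i == ord_max then nth 1 w #|J| else 1) | i < n.+1].

End copulas.
Arguments unit_cube {R} k.
Arguments copula {R k} A.
Arguments lower_box {R m} u.
Arguments markov_kernel_of {R m} A K.
Arguments cont_on_cube {R m} f.
Arguments weak_conv {R m} mu_ mu.
Arguments wcc {R m} A_ A.
Arguments marginal {R n} C J.

From HB Require Import structures.
From mathcomp Require Import all_boot all_order all_algebra.
From mathcomp Require Import all_classical all_reals all_analysis.
From mathcomp Require Import measurable_realfun lra.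

Import Order.TTheory GRing.Theory Num.Theory.
Import numFieldNormedType.Exports.

Local Open Scope classical_set_scope.
Local Open Scope ring_scope.

(* The Markov kernel of C_{J u {d}} is the image of the kernel of C under the
   projection x |-> (x_j)_{j in J}: inside the cube, the preimage of the box
   [0, u] is the box [0, u'] where u' fills the coordinates outside J with
   1, and C(u', v) is exactly C_{J u {d}}(u, v).  Continuous test functions
   stay continuous when composed with the projection, so weak convergence of
   K_{C_n}(v, .) to K_C(v, .) passes to the image kernels at the same v. *)

Section kernel_pushforward.
Local Open Scope ereal_scope.
Context {d d' d'' : measure_display} {X : measurableType d}
  {Y : measurableType d'} {Z : measurableType d''} {R : realType}.
Variables (k : R.-pker X ~> Y) (p : {mfun Y >-> Z}).

Definition kpushforward_fun (x : X) : set Z -> \bar R := pushforward (k x) p.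

Let kpushforward0 x : kpushforward_fun x set0 = 0.
Proof. exact: measure0. Qed.

Let kpushforward_ge0 x A : 0 <= kpushforward_fun x A.
Proof. exact: measure_ge0. Qed.

Let kpushforward_sigma_additive x : semi_sigma_additive (kpushforward_fun x).
Proof. exact: measure_semi_sigma_additive. Qed.

HB.instance Definition _ x := isMeasure.Build _ _ _ (kpushforward_fun x)
  (kpushforward0 x) (kpushforward_ge0 x) (kpushforward_sigma_additive x).

Definition kpushforward (x : X) : {measure set Z -> \bar R} :=
  kpushforward_fun x.

Lemma kpushforwardE x A : kpushforward x A = k x (p @^-1` A).
Proof. by []. Qed.

Let measurable_kpushforward U :
  measurable U -> measurable_fun [set: X] (kpushforward ^~ U).
Proof.
move=> mU; apply: (measurable_kernel k (p @^-1` U)).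
by rewrite -[X in measurable X]setTI; exact: measurable_funPT.
Qed.

HB.instance Definition _ :=
  isKernel.Build _ _ _ _ _ kpushforward measurable_kpushforward.

Let kpushforward_setT x : kpushforward x [set: Z] = 1.
Proof. by rewrite kpushforwardE preimage_setT prob_kernel. Qed.

HB.instance Definition _ :=
  Kernel_isProbability.Build _ _ _ _ _ kpushforward kpushforward_setT.

End kernel_pushforward.

Section conull_sets.
Local Open Scope ereal_scope.
Context {d : measure_display} {T : measurableType d} {R : realType}.
Variable mu : {measure set T -> \bar R}.

Lemma measureI_conull (A D : set T) : measurable A -> measurable D ->
  mu (~` D) = 0 -> mu (A `&` D) = mu A.
Proof.
move=> mA mD D0; have mDC := measurableC mD.
rewrite [RHS](measureDI mu mA mDC) setDE setCK.
rewrite (subset_measure0 _ mDC (@subIsetr _ A _) D0) ?adde0 //.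
exact: measurableI.
Qed.

Lemma integral_setI_conull (A D : set T) (f : T -> \bar R) :
  measurable A -> measurable D -> measurable_fun A f -> mu (~` D) = 0 ->
  \int[mu]_(x in A) f x = \int[mu]_(x in A `&` D) f x.
Proof.
move=> mA mD mf D0; rewrite -[D in RHS]setCK -setDE integralE [RHS]integralE.
have mDC := measurableC mD.
rewrite (ge0_negligible_integral mDC mA (measurable_funepos mf)) //.
by rewrite (ge0_negligible_integral mDC mA (measurable_funeneg mf)).
Qed.

End conull_sets.

Section integral_pushforward_measurable.
Local Open Scope ereal_scope.
Context {d1 d2 : measure_display} {X : measurableType d1}
  {Y : measurableType d2} {R : realType}.
Variables (phi : X -> Y) (mphi : measurable_fun [set: X] phi).
Variable mu : {measure set X -> \bar R}.

Lemma integral_pushforward_mfun (D : set Y) (f : Y -> \bar R) :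
  measurable D -> measurable_fun D f ->
  \int[pushforward mu phi]_(y in D) f y =
  \int[mu]_(x in phi @^-1` D) (f \o phi) x.
Proof.
move=> mD mf; rewrite [LHS]integralE [RHS]integralE.
rewrite (funepos_comp f phi) (funeneg_comp f phi).
have fpos0 : {in D, forall y, 0 <= f^\+ y} by move=> y _; exact: funepos_ge0.
have fneg0 : {in D, forall y, 0 <= f^\- y} by move=> y _; exact: funeneg_ge0.
rewrite (ge0_integral_pushforward mphi mu mD (measurable_funepos mf) fpos0).
by rewrite (ge0_integral_pushforward mphi mu mD (measurable_funeneg mf) fneg0).
Qed.

End integral_pushforward_measurable.

Section unit_cube.
Context {R : realType}.

Lemma measurable_tuple_box m (I : 'I_m -> set R) :
  (forall i, measurable (I i)) ->
  measurable [set x : m.-tuple R | forall i, I i (tnth x i)].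
Proof.
move=> mI.
have -> : [set x : m.-tuple R | forall i, I i (tnth x i)] =
    \bigcap_(i in [set: 'I_m]) ((@tnth m R)^~ i @^-1` I i).
  by apply/seteqP; split=> x /= xI i; [move=> _; exact: xI | exact: xI].
apply: fin_bigcap_measurable; first exact: finite_finset.
by move=> i _; rewrite -[X in measurable X]setTI; exact: measurable_tnth.
Qed.

Lemma measurable_unit_cube m : measurable (unit_cube m : set (m.-tuple R)).
Proof.
rewrite (_ : unit_cube m = [set x | forall i, `[0, 1]%classic (tnth x i)]).
  apply: (@measurable_tuple_box m (fun=> `[0, 1]%classic)) => i.
  exact: measurable_itv.
by apply/seteqP; split=> x /= cx i; move: (cx i); rewrite in_itv.
Qed.

Lemma measurable_lower_box m (u : m.-tuple R) : measurable (lower_box u).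
Proof.
rewrite (_ : lower_box u =
    [set x | forall i, `[0, tnth u i]%classic (tnth x i)]).
  apply: (@measurable_tuple_box m (fun i => `[0, tnth u i]%classic)) => i.
  exact: measurable_itv.
by apply/seteqP; split=> x /= cx i; move: (cx i); rewrite in_itv.
Qed.

Lemma rat_tuple_near {m} (x : m.-tuple R) {r : R} : 0 < r ->
  exists c : m.-tuple rat, forall i, `|ratr (tnth c i) - tnth x i| < r.
Proof.
move=> r0.
have /fin_all_exists[c xc] : forall i, exists q : rat, `|ratr q - tnth x i| < r.
  move=> i; have [|q] := @rat_in_itvoo R (tnth x i - r) (tnth x i + r).
    lra.
  rewrite in_itv /= => /andP[q1 q2]; exists q.
  by rewrite ltr_norml; apply/andP; lra.
by exists [tuple c i | i < m] => i; rewrite tnth_mktuple.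
Qed.

(* Such an O is the trace on the cube of a countable union of boxes with
   rational centres and radii. *)
Lemma measurable_cube_open m (O : set (m.-tuple R)) : O `<=` unit_cube m ->
  (forall x, O x -> exists2 e : R, 0 < e & forall y, unit_cube m y ->
     (forall i, `|tnth x i - tnth y i| < e) -> O y) ->
  measurable O.
Proof.
move=> Ocube Oopen.
pose box (cr : m.-tuple rat * rat) : set (m.-tuple R) :=
  [set y | forall i, ball (ratr (tnth cr.1 i) : R) (ratr cr.2) (tnth y i)].
pose good := [set cr | unit_cube m `&` box cr `<=` O].
have -> : O = unit_cube m `&` \bigcup_(cr in good) box cr.
  apply/seteqP; split=> [x Ox|x [cx [cr good_cr xcr]]]; last exact: good_cr.
  split; first exact: Ocube.
  have [e e0 Oe] := Oopen x Ox.
  have [|r] := @rat_in_itvoo R 0 (e / 2); first by rewrite divr_gt0.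
  rewrite in_itv /= => /andP[r0 re].
  have [c xc] := rat_tuple_near x r0.
  exists (c, r) => [y [cy ycr]|] /=; last exact: xc.
  apply: Oe => // i; move: (xc i) (ycr i); rewrite /ball /= !ltr_norml.
  move=> /andP[? ?] /andP[? ?]; apply/andP; lra.
apply: measurableI; first exact: measurable_unit_cube.
rewrite bigcup_mkcond; apply: countable_bigcupT_measurable.
  exact: countableP.
move=> cr; case: ifP => _ //.
apply: (@measurable_tuple_box m (fun i => ball (ratr (tnth cr.1 i) : R) _)).
by move=> i; exact: measurable_ball.
Qed.

Lemma measurable_fun_cont_on_cube m (f : m.-tuple R -> R) :
  cont_on_cube f -> measurable_fun (unit_cube m) f.
Proof.
move=> cf; apply: (measurability _ (RGenOpens.measurableE R)).
move=> _ [_ [a [b ->]] <-]; apply: measurable_cube_open => [x []//|x [cx]].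
rewrite /= in_itv /= => /andP[ax xb].
have e0 : 0 < Num.min (f x - a) (b - f x) by rewrite lt_min !subr_gt0 ax xb.
have [delta delta0 near_f] := cf x (mem_set cx) _ e0.
exists delta => // y cy /(near_f y (mem_set cy)).
rewrite lt_min !ltr_norml => /andP[/andP[? ?] /andP[? ?]].
by split => //; rewrite /= in_itv /=; apply/andP; lra.
Qed.

End unit_cube.

Section coord_proj.
Context {R : realType} {n : nat} (J : {set 'I_n.+1}).

Definition coord_proj (x : n.-tuple R) : #|J|.-tuple R :=
  [tuple nth 0 x (enum_val w) | w < #|J|].

Lemma coord_proj_cube x : unit_cube n x -> unit_cube #|J| (coord_proj x).
Proof.
move=> cx w; rewrite tnth_mktuple.
have [jn|jn] := ltnP (enum_val w) n.
  by rewrite -(tnth_nth 0 x (Ordinal jn)); exact: cx.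
by rewrite nth_default ?size_tuple // lexx ler01.
Qed.

Lemma measurable_coord_proj : measurable_fun [set: n.-tuple R] coord_proj.
Proof.
apply/measurable_fun_tnthP => w.
have [jn|jn] := ltnP (enum_val w) n.
  rewrite (_ : _ \o _ = (@tnth n R)^~ (Ordinal jn)).
    exact: measurable_tnth.
  by apply/funext => x /=; rewrite tnth_mktuple (tnth_nth 0).
rewrite (_ : _ \o _ = cst 0); first exact: measurable_cst.
by apply/funext => x /=; rewrite tnth_mktuple nth_default ?size_tuple.
Qed.

HB.instance Definition _ :=
  isMeasurableFun.Build _ _ _ _ coord_proj measurable_coord_proj.

Lemma cont_on_cube_coord_proj (f : #|J|.-tuple R -> R) :
  cont_on_cube f -> cont_on_cube (f \o coord_proj).
Proof.
move=> cf x /set_mem cx e e0.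
have [delta delta0 near_f] := cf _ (mem_set (coord_proj_cube _ cx)) e e0.
exists delta => // y /set_mem cy xy; apply: near_f => [|w].
  exact/mem_set/coord_proj_cube.
rewrite !tnth_mktuple; have [jn|jn] := ltnP (enum_val w) n.
  by rewrite -!(tnth_nth 0 _ (Ordinal jn)); exact: xy.
by rewrite !nth_default ?size_tuple // subrr normr0.
Qed.

Lemma index_enum_val (w : 'I_#|J|) : index (enum_val w) (enum J) = w.
Proof. by rewrite (enum_val_nth ord0) index_uniq ?enum_uniq // -cardE. Qed.

Hypothesis J_lt_max : J \subset [set i : 'I_n.+1 | i != ord_max]%SET.

Lemma coord_lt_n {j : 'I_n.+1} : j \in J -> (j < n)%N.
Proof.
move=> jJ; have /fintype.subsetP/(_ j jJ) := J_lt_max.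
by rewrite inE -ltnS ltn_neqAle ltn_ord andbT.
Qed.

Definition coord_pad1 (u : #|J|.-tuple R) : n.-tuple R :=
  [tuple if widen_ord (leqnSn n) i \in J
         then nth 1 u (index (widen_ord (leqnSn n) i) (enum J)) else 1 | i < n].

Lemma coord_pad1_cube u : unit_cube #|J| u -> unit_cube n (coord_pad1 u).
Proof.
move=> cu i; rewrite tnth_mktuple /=; case: ifP => _; last first.
  by rewrite ler01 lexx.
have [wJ|wJ] := ltnP (index (widen_ord (leqnSn n) i) (enum J)) #|J|.
  by rewrite -(tnth_nth 1 u (Ordinal wJ)); exact: cu.
by rewrite nth_default ?size_tuple // ler01 lexx.
Qed.

Lemma marginal_rcons (A : n.+1.-tuple R -> R) (u : #|J|.-tuple R) v :
  marginal A J [tuple of rcons u v] = A [tuple of rcons (coord_pad1 u) v].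
Proof.
congr (A _); apply: eq_from_tnth => i.
rewrite tnth_mktuple (tnth_nth 0) [in RHS]nth_rcons (size_tuple (coord_pad1 u)).
have [iJ|iJ] := boolP (i \in J).
  have il := coord_lt_n iJ.
  have ilJ : (index i (enum J) < #|J|)%N by rewrite cardE index_mem mem_enum.
  rewrite nth_rcons (size_tuple u) ilJ il -(tnth_nth 0 _ (Ordinal il)).
  rewrite tnth_mktuple (_ : widen_ord _ _ = i) ?iJ //; exact: val_inj.
have [->|imax] := eqVneq i ord_max.
  by rewrite eqxx nth_rcons (size_tuple u) !ltnn eqxx.
have il : (i < n)%N by rewrite -ltnS ltn_neqAle ltn_ord andbT.
rewrite il -(tnth_nth 0 _ (Ordinal il)) tnth_mktuple.
by rewrite (_ : widen_ord _ _ = i) ?(negbTE iJ) //; exact: val_inj.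
Qed.

Lemma lower_box_coord_pad1 u : unit_cube #|J| u ->
  lower_box (coord_pad1 u) = unit_cube n `&` coord_proj @^-1` lower_box u.
Proof.
move=> cu; apply/seteqP; split=> [x xu|x [cx xu] i].
  split=> [i|w].
    have /andP[x0 xp] := xu i; have /andP[_ p1] := coord_pad1_cube _ cu i.
    by rewrite x0 (le_trans xp p1).
  have il := coord_lt_n (enum_valP w).
  have /andP[x0] := xu (Ordinal il).
  rewrite /= !tnth_mktuple -!(tnth_nth 0 x (Ordinal il)).
  rewrite (_ : widen_ord _ _ = enum_val w); last exact: val_inj.
  by rewrite enum_valP index_enum_val (tnth_nth 1 u) => ->; rewrite x0.
rewrite tnth_mktuple /=; case: ifPn => [jJ|_]; last by have := cx i.
pose w := enum_rank_in jJ (widen_ord (leqnSn n) i).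
have wE : enum_val w = widen_ord (leqnSn n) i by exact: enum_rankK_in.
have := xu w; rewrite !tnth_mktuple wE -(tnth_nth 0 x i) => /andP[-> /=].
by rewrite -wE index_enum_val -tnth_nth.
Qed.

Lemma markov_kernel_of_marginal (A : n.+1.-tuple R -> R)
    (K : R.-pker R ~> n.-tuple R) :
  markov_kernel_of A K ->
  markov_kernel_of (marginal A J) (kpushforward K coord_proj).
Proof.
have mproj B : measurable B -> measurable (coord_proj @^-1` B).
  by move=> mB; rewrite -[X in measurable X]setTI; exact: measurable_funPT.
move=> [K_cube K_A]; split=> [v v01|u v /set_mem cu v01].
  rewrite kpushforwardE; apply: subset_measure0 (K_cube v v01).
  - exact: mproj (measurableC (measurable_unit_cube _)).
  - exact: measurableC (measurable_unit_cube _).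
  - by move=> x /= pxC cx; exact/pxC/coord_proj_cube.
have pad_cu : coord_pad1 u \in unit_cube n := mem_set (coord_pad1_cube _ cu).
rewrite marginal_rcons K_A //.
apply: eq_integral => t /[!inE] /= /[!in_itv] /= /andP[t0 tv].
have t01 : (0 <= t <= 1)%R by rewrite t0 (le_trans tv); case/andP: v01.
rewrite kpushforwardE lower_box_coord_pad1 // setIC measureI_conull //.
- exact: mproj (measurable_lower_box _ _).
- exact: measurable_unit_cube.
- exact: K_cube.
Qed.

End coord_proj.

Section weak_conv_pushforward.
Local Open Scope ereal_scope.
Context {R : realType} {m m' : nat}.
Variable p : {mfun m.-tuple R >-> m'.-tuple R}.
Hypothesis p_cube : forall x, unit_cube m x -> unit_cube m' (p x).
Hypothesis p_cont : forall f, cont_on_cube f -> cont_on_cube (f \o p).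

Lemma integral_pushforward_cube (mu : {measure set (m.-tuple R) -> \bar R})
    (f : m'.-tuple R -> R) :
  mu (~` unit_cube m) = 0 -> cont_on_cube f ->
  \int[pushforward mu p]_(y in unit_cube m') (f y)%:E =
  \int[mu]_(x in unit_cube m) (f (p x))%:E.
Proof.
move=> mu0 cf; have mcube := @measurable_unit_cube R.
have mf : measurable_fun (unit_cube m') (EFin \o f).
  by apply/measurable_EFinP; exact: measurable_fun_cont_on_cube.
have mpcube : measurable (p @^-1` unit_cube m').
  by rewrite -[X in measurable X]setTI; exact: measurable_funPT _ _ (mcube _).
rewrite (integral_pushforward_mfun _ (measurable_funPT p) mu _ _ (mcube _) mf).
rewrite (integral_setI_conull mu _ _ _ mpcube (mcube _)) //; last first.
  apply: measurable_comp mf (measurable_funTS (measurable_funPT p)).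
    exact: mcube.
  exact: image_preimage_subset.
by rewrite setIidr //; exact: p_cube.
Qed.

Lemma weak_conv_pushforward
    (mu_ : nat -> {measure set (m.-tuple R) -> \bar R})
    (mu : {measure set (m.-tuple R) -> \bar R}) :
  (forall k, mu_ k (~` unit_cube m) = 0) -> mu (~` unit_cube m) = 0 ->
  weak_conv mu_ mu ->
  weak_conv (fun k => pushforward (mu_ k) p) (pushforward mu p).
Proof.
move=> mu_0 mu0 mu_mu f cf; rewrite integral_pushforward_cube //.
under eq_fun do rewrite integral_pushforward_cube //.
exact: mu_mu _ (p_cont _ cf).
Qed.

End weak_conv_pushforward.

Local Close Scope classical_set_scope.

Theorem theorem2p2 (R : realType) (n : nat) (hn : (1 <= n)%N)
    (C : n.+1.-tuple R -> R) (C_ : nat -> n.+1.-tuple R -> R) :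
  copula C -> (forall k, copula (C_ k)) ->
  wcc C_ C ->
  forall J : {set 'I_n.+1},
    J \subset [set i : 'I_n.+1 | i != ord_max] -> (0 < #|J|)%N ->
    wcc (fun k => marginal (C_ k) J) (marginal C J).
Proof.
move=> _ _ [K_ [K [K_C_ K_C K_K]]] J J_lt_max _.
exists (fun k => kpushforward (K_ k) (coord_proj J)).
exists (kpushforward K (coord_proj J)).
split=> [k||]; [exact: markov_kernel_of_marginal ..|].
apply: filterS K_K; first exact: (ae_filter_ringOfSetsType lebesgue_measure).
move=> v K_Kv v01; apply: weak_conv_pushforward (K_Kv v01).
- exact: coord_proj_cube.
- exact: cont_on_cube_coord_proj.
- by move=> k; case: (K_C_ k) => + _; exact.
- by case: K_C => + _; exact.
Qed.
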